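(* Let $f(\mathbf z)$ be a holomorphic function of $n$ variables defined near the origin, let $a,b$ be non-negative integers with $a>b\ge0$ (respectively $0\le a<b$), and let $g(\mathbf w,\bar{\mathbf w})=f(w_1^a\bar w_1^b,\dots,w_n^a\bar w_n^b)$. Then $g$ is holomorphic-like (respectively anti-holomorphic-like) in a neighborhood of the origin, i.e. there is a neighborhood $U$ of the origin such that $C_g(\mathbf w,\bar{\mathbf w})\ge0$ (respectively $\le 0$) for all $\mathbf w\in g^{-1}(0)\cap U$.
   Context: For a mixed function $g(\mathbf w,\bar{\mathbf w})$ write $g_{w_j}=\partial g/\partial w_j$, $g_{\bar w_j}=\partial g/\partial\bar w_j$, and set $C_{j,k}=|w_j\overline{g_{w_k}}-w_k\overline{g_{w_j}}|^2-|w_jg_{\bar w_k}-w_kg_{\bar w_j}|^2$, $C_g(\mathbf w,\bar{\mathbf w})=\sum_{1\le j<k\le n}C_{j,k}$. The paper calls a mixed function with an isolated mixed singularity at the origin holomorphic-like (resp. anti-holomorphic-like) on a neighborhood $U$ of $0$ if $C_g\ge0$ (resp. $\le0$) at every point of $g^{-1}(0)\cap U$. *)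

From Stdlib Require Import Reals.
From Coquelicot Require Import Coquelicot.
From mathcomp Require Import ssreflect ssrbool eqtype ssrnat fintype bigop.

Open Scope R_scope.

Definition Vec (n : nat) := 'I_n -> C.

Fixpoint cpow (z : C) (k : nat) : C :=
  match k with O => RtoC 1 | S k' => Cmult z (cpow z k') end.

Definition vnorm {n} (h : Vec n) : R := \big[Rmax/0]_(i < n) Cmod (h i).

Definition in_polydisc {n} (r : R) (z : Vec n) : Prop := forall i, Cmod (z i) < r.

Definition vadd {n} (z h : Vec n) : Vec n := fun i => Cplus (z i) (h i).

Definition holomorphic_on {n} (rho : R) (f : Vec n -> C) : Prop :=
  forall z : Vec n, in_polydisc rho z ->
    exists D : Vec n, forall eps, 0 < eps -> exists delta, 0 < delta /\
      forall h : Vec n, in_polydisc delta h ->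
        Cmod (Cminus (Cminus (f (vadd z h)) (f z))
                     (\big[Cplus/RtoC 0]_(i < n) Cmult (D i) (h i)))
          <= eps * vnorm h.

Definition shift {n} (w : Vec n) (j : 'I_n) (c : C) : Vec n :=
  fun i => if i == j then Cplus (w i) c else w i.

Definition pdx {n} (g : Vec n -> C) (w : Vec n) (j : 'I_n) : C :=
  (Derive (fun t => Re (g (shift w j (RtoC t)))) 0,
   Derive (fun t => Im (g (shift w j (RtoC t)))) 0).
Definition pdy {n} (g : Vec n -> C) (w : Vec n) (j : 'I_n) : C :=
  (Derive (fun t => Re (g (shift w j (Cmult Ci (RtoC t))))) 0,
   Derive (fun t => Im (g (shift w j (Cmult Ci (RtoC t))))) 0).

Definition dw {n} (g : Vec n -> C) (w : Vec n) (j : 'I_n) : C :=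
  Cmult (RtoC (/2)) (Cminus (pdx g w j) (Cmult Ci (pdy g w j))).
Definition dwbar {n} (g : Vec n -> C) (w : Vec n) (j : 'I_n) : C :=
  Cmult (RtoC (/2)) (Cplus (pdx g w j) (Cmult Ci (pdy g w j))).

Definition Cjk {n} (g : Vec n -> C) (w : Vec n) (j k : 'I_n) : R :=
  (Cmod (Cminus (Cmult (w j) (Cconj (dw g w k))) (Cmult (w k) (Cconj (dw g w j))))) ^ 2
  - (Cmod (Cminus (Cmult (w j) (dwbar g w k)) (Cmult (w k) (dwbar g w j)))) ^ 2.

Definition Cg {n} (g : Vec n -> C) (w : Vec n) : R :=
  \big[Rplus/0]_(j < n) \big[Rplus/0]_(k < n | (j < k)%N) Cjk g w j k.

Definition gab {n} (a b : nat) (f : Vec n -> C) : Vec n -> C :=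
  fun w => f (fun i => Cmult (cpow (w i) a) (cpow (Cconj (w i)) b)).

(* Along a line t |-> w + t c e_j the chain rule, with D the complex differential of f
   at m(w) = (w_i^a conj(w_i)^b)_i, gives the real derivative
   D_j (c a w_j^(a-1) conj(w_j)^b + conj(c) b w_j^a conj(w_j)^(b-1)); taking c = 1 and
   c = i yields g_{w_j} = D_j a w_j^(a-1) conj(w_j)^b and
   g_{conj w_j} = D_j b w_j^a conj(w_j)^(b-1).  For a, b >= 1 the two differences in
   C_{j,k} are then a w_j w_k conj(E) and b w_j w_k E, where
   E = D_k w_k^(a-1) conj(w_k)^(b-1) - D_j w_j^(a-1) conj(w_j)^(b-1),
   so C_{j,k} = (a^2 - b^2) |w_j w_k E|^2; for b = 0 (resp. a = 0) the second (resp. first)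
   difference vanishes.  Hence every C_{j,k} has the sign of a - b on the whole polydisc of
   radius min(1, rho), which m maps into the polydisc of radius rho, not only on g^-1(0). *)

From HB Require Import structures.
From Stdlib Require Import Reals Lra Psatz FunctionalExtensionality.
From Coquelicot Require Import Coquelicot.
From mathcomp Require Import ssreflect ssrbool eqtype ssrnat fintype bigop.
Open Scope R_scope.

HB.instance Definition _ :=
  Monoid.isComLaw.Build C (RtoC 0) Cplus Cplus_assoc Cplus_comm Cplus_0_l.

Lemma locally0_Rabs (P : R -> Prop) (d : posreal) :
  (forall t, Rabs t < d -> P t) -> locally 0 P.
Proof. by move=> H; exists d => t Ht; apply: H; rewrite -[t]Rminus_0_r; exact: Ht. Qed.

Lemma Cconj_RtoC (x : R) : Cconj (RtoC x) = RtoC x.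
Proof. by apply: injective_projections => /=; ring. Qed.

Lemma Cmod_Im_le (c : C) : Rabs (Im c) <= Cmod c.
Proof. by have := re_le_Cmod (Im c, Re c); rewrite /Cmod /= Rplus_comm. Qed.

(** * Little-o and big-O at 0 for complex-valued functions of a real variable *)

Definition littleo0 (E : R -> C) : Prop :=
  forall eps : posreal, locally 0 (fun t => Cmod (E t) <= eps * Rabs t).

Definition bigO0 (E : R -> C) : Prop :=
  exists K : posreal, locally 0 (fun t => Cmod (E t) <= K * Rabs t).

Lemma littleo0_plus (A B : R -> C) :
  littleo0 A -> littleo0 B -> littleo0 (fun t => Cplus (A t) (B t)).
Proof.
move=> HA HB eps; have e2 : 0 < eps / 2 by have := cond_pos eps; lra.
apply: filter_imp (filter_and _ _ (HA (mkposreal _ e2)) (HB (mkposreal _ e2))) => t /= [].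
have := Cmod_triangle (A t) (B t); lra.
Qed.

Lemma littleo0_scal (c : C) (A : R -> C) :
  littleo0 A -> littleo0 (fun t => Cmult c (A t)).
Proof.
move=> HA eps; have Hc := Cmod_ge_0 c.
have e' : 0 < eps / (Cmod c + 1) by apply: Rdiv_lt_0_compat; [exact: cond_pos | lra].
apply: filter_imp (HA (mkposreal _ e')) => t /= Ht; rewrite Cmod_mult.
have : eps / (Cmod c + 1) * (Cmod c + 1) = eps by field; lra.
have := Rabs_pos t; nra.
Qed.

Lemma littleo0_mult (A B : R -> C) :
  bigO0 A -> bigO0 B -> littleo0 (fun t => Cmult (A t) (B t)).
Proof.
move=> [KA HA] [KB HB] eps; have HKA := cond_pos KA; have HKB := cond_pos KB.
have d : 0 < eps / (KA * KB) by apply: Rdiv_lt_0_compat; [exact: cond_pos | nra].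
have Hsmall := locally0_Rabs _ (mkposreal _ d) (fun t H => H).
apply: filter_imp (filter_and _ _ (filter_and _ _ HA HB) Hsmall).
move=> t /= [[Ha Hb] Ht]; rewrite Cmod_mult.
have Ht0 := Rabs_pos t; have := Cmod_ge_0 (A t); have := Cmod_ge_0 (B t).
have : KA * KB * Rabs t <= eps.
  by have := proj2 (Rlt_div_r _ _ _ (Rmult_lt_0_compat _ _ HKA HKB)) Ht; nra.
move=> *; apply: Rle_trans (Rmult_le_compat _ _ _ _ _ _ Ha Hb) _ => //; nra.
Qed.

Definition is_derive0 (G : R -> C) (L : C) : Prop :=
  littleo0 (fun t => Cminus (Cminus (G t) (G 0)) (Cmult (RtoC t) L)).

Lemma is_derive0_bigO (G : R -> C) (L : C) :
  is_derive0 G L -> bigO0 (fun t => Cminus (G t) (G 0)).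
Proof.
move=> HG; have K : 0 < Cmod L + 1 by have := Cmod_ge_0 L; lra.
exists (mkposreal _ K); apply: filter_imp (HG (mkposreal _ Rlt_0_1)) => t /= Ht.
set R0 := Cminus (Cminus _ _) _ in Ht.
have -> : Cminus (G t) (G 0) = Cplus R0 (Cmult (RtoC t) L) by rewrite /R0; ring.
apply: Rle_trans (Cmod_triangle _ _) _; rewrite Cmod_mult Cmod_R; nra.
Qed.

Lemma is_derive0_Derive (G : R -> C) (L : C) :
  is_derive0 G L ->
  Derive (fun t => Re (G t)) 0 = Re L /\ Derive (fun t => Im (G t)) 0 = Im L.
Proof.
move=> HG; split; apply: is_derive_unique; split; try exact: is_linear_scal_l;
  move=> x /is_filter_lim_locally_unique <- eps;
  apply: filter_imp (HG eps) => t /=; rewrite /minus /plus /opp /scal /mult /=;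
  set R0 := Cminus (Cminus _ _) _ => HR;
  rewrite /norm /= /abs /= /mult /= Ropp_0 Rplus_0_r.
- have -> : Re (G t) + - Re (G 0) + - (t * Re L) = Re R0
    by rewrite /R0; move: (G t) (G 0) (L) => [? ?] [? ?] [? ?] /=; ring.
  have := re_le_Cmod R0; lra.
- have -> : Im (G t) + - Im (G 0) + - (t * Im L) = Im R0
    by rewrite /R0; move: (G t) (G 0) (L) => [? ?] [? ?] [? ?] /=; ring.
  have := Cmod_Im_le R0; lra.
Qed.

Lemma is_derive0_affine (u c : C) : is_derive0 (fun t => Cplus u (Cmult (RtoC t) c)) c.
Proof.
move=> eps; apply: filter_forall => t.
have -> : Cminus (Cminus (Cplus u (Cmult (RtoC t) c)) (Cplus u (Cmult (RtoC 0) c)))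
                 (Cmult (RtoC t) c) = RtoC 0 by apply: injective_projections => /=; ring.
rewrite Cmod_0; have := Rabs_pos t; have := cond_pos eps; nra.
Qed.

Lemma is_derive0_conj (G : R -> C) (L : C) :
  is_derive0 G L -> is_derive0 (fun t => Cconj (G t)) (Cconj L).
Proof.
move=> HG eps; apply: filter_imp (HG eps) => t.
have -> : Cminus (Cminus (Cconj (G t)) (Cconj (G 0))) (Cmult (RtoC t) (Cconj L))
        = Cconj (Cminus (Cminus (G t) (G 0)) (Cmult (RtoC t) L))
  by apply: injective_projections => /=; ring.
by rewrite Cmod_conj.
Qed.

Lemma is_derive0_mult (P Q : R -> C) (P' Q' : C) :
  is_derive0 P P' -> is_derive0 Q Q' ->
  is_derive0 (fun t => Cmult (P t) (Q t)) (Cplus (Cmult P' (Q 0)) (Cmult (P 0) Q')).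
Proof.
move=> HP HQ; rewrite /is_derive0; cbv beta.
have -> : (fun t => Cminus (Cminus (Cmult (P t) (Q t)) (Cmult (P 0) (Q 0)))
            (Cmult (RtoC t) (Cplus (Cmult P' (Q 0)) (Cmult (P 0) Q')))) =
          (fun t => Cplus (Cplus
            (Cmult (Q 0) (Cminus (Cminus (P t) (P 0)) (Cmult (RtoC t) P')))
            (Cmult (P 0) (Cminus (Cminus (Q t) (Q 0)) (Cmult (RtoC t) Q'))))
            (Cmult (Cminus (P t) (P 0)) (Cminus (Q t) (Q 0))))
  by apply: functional_extensionality => t; ring.
apply: littleo0_plus; last exact: littleo0_mult (is_derive0_bigO _ _ HP) (is_derive0_bigO _ _ HQ).
by apply: littleo0_plus; apply: littleo0_scal.
Qed.

Lemma is_derive0_cpow (P : R -> C) (P' : C) (k : nat) :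
  is_derive0 P P' ->
  is_derive0 (fun t => cpow (P t) k) (Cmult (Cmult (RtoC (INR k)) (cpow (P 0) k.-1)) P').
Proof.
move=> HP; elim: k => [|k IH].
  have := is_derive0_affine (RtoC 1) (RtoC 0); congr is_derive0.
  - by apply: functional_extensionality => t /=; apply: injective_projections => /=; ring.
  - by apply: injective_projections => /=; ring.
have := is_derive0_mult _ _ _ _ HP IH; congr is_derive0.
rewrite S_INR; case: k {IH} => [|k] /=; apply: injective_projections => /=; ring.
Qed.

(** * The monomial map and the chain rule *)

Definition mono (a b : nat) (z : C) : C := Cmult (cpow z a) (cpow (Cconj z) b).

(* a z^(a-1) conj(z)^b and b z^a conj(z)^(b-1): with the truncated a.-1 and b.-1
   they vanish for a = 0 and b = 0 respectively, thanks to the factors INR a, INR b. *)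
Definition mono_dz (a b : nat) (z : C) : C :=
  Cmult (Cmult (RtoC (INR a)) (cpow z a.-1)) (cpow (Cconj z) b).
Definition mono_dzbar (a b : nat) (z : C) : C :=
  Cmult (Cmult (RtoC (INR b)) (cpow z a)) (cpow (Cconj z) b.-1).

Definition mono_vec {n} (a b : nat) (w : Vec n) : Vec n := fun i => mono a b (w i).

Lemma Cmod_cpow (z : C) (k : nat) : Cmod (cpow z k) = Cmod z ^ k.
Proof. by elim: k => [|k IH] /=; [rewrite Cmod_R Rabs_R1 | rewrite Cmod_mult IH]. Qed.

Lemma in_polydisc_mono_vec {n} (a b : nat) (r : R) (w : Vec n) :
  (0 < a + b)%N -> r <= 1 -> in_polydisc r w -> in_polydisc r (mono_vec a b w).
Proof.
move=> Hab Hr Hw i; rewrite /mono_vec /mono Cmod_mult !Cmod_cpow Cmod_conj -pow_add.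
have Hx := Hw i; have Hx0 := Cmod_ge_0 (w i); move: Hx Hx0; set x := Cmod (w i) => Hx Hx0.
have -> : (a + b)%coq_nat = (a + b)%N by [].
case: (a + b)%N Hab => [//|k] _ /=.
have : x ^ k <= 1 by elim: k => [|k IH] /=; [lra | have := pow_le x k Hx0; nra].
have := pow_le x k Hx0; nra.
Qed.

Lemma is_derive0_mono (a b : nat) (u c : C) :
  is_derive0 (fun t => mono a b (Cplus u (Cmult (RtoC t) c)))
             (Cplus (Cmult c (mono_dz a b u)) (Cmult (Cconj c) (mono_dzbar a b u))).
Proof.
have Hu := is_derive0_affine u c.
have := is_derive0_mult _ _ _ _ (is_derive0_cpow _ _ a Hu)
          (is_derive0_cpow _ _ b (is_derive0_conj _ _ Hu)).
have -> : Cplus u (Cmult (RtoC 0) c) = u by apply: injective_projections => /=; ring.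
by congr is_derive0; rewrite /mono_dz /mono_dzbar; ring.
Qed.

Definition frechet_at {n} (f : Vec n -> C) (z D : Vec n) : Prop :=
  forall eps, 0 < eps -> exists delta, 0 < delta /\
    forall h : Vec n, in_polydisc delta h ->
      Cmod (Cminus (Cminus (f (vadd z h)) (f z))
                   (\big[Cplus/RtoC 0]_(i < n) Cmult (D i) (h i)))
        <= eps * vnorm h.

Lemma vnorm_le {n} (h : Vec n) (c : R) :
  0 <= c -> (forall i, Cmod (h i) <= c) -> vnorm h <= c.
Proof.
move=> Hc H; apply: (big_ind (fun x => x <= c)) => // x y Hx Hy.
by rewrite /Rmax; case: Rle_dec.
Qed.

Lemma frechet_at_update {n} (f : Vec n -> C) (z D : Vec n) (j : 'I_n) (p : R -> C) (p' : C) :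
  frechet_at f z D -> is_derive0 p p' -> p 0 = z j ->
  is_derive0 (fun t => f (fun i => if i == j then p t else z i)) (Cmult (D j) p').
Proof.
move=> Hf Hp Hp0.
set q := fun t => Cminus (p t) (p 0).
set h := fun t (i : 'I_n) => if i == j then q t else RtoC 0.
have Eupd t : (fun i => if i == j then p t else z i) = vadd z (h t).
  apply: functional_extensionality => i; rewrite /vadd /h /q.
  by case: eqP => [->|_]; rewrite ?Hp0; apply: injective_projections => /=; ring.
have Ez : (fun i => if i == j then p 0 else z i) = z.
  by apply: functional_extensionality => i; case: eqP => [->|].
have Hsum t : \big[Cplus/RtoC 0]_(i < n) Cmult (D i) (h t i) = Cmult (D j) (q t).
  rewrite (bigD1 j) //= big1 /h ?eqxx; first by rewrite Cplus_0_r.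
  by move=> i /negbTE ->; apply: injective_projections => /=; ring.
have Hvnorm t : vnorm (h t) <= Cmod (q t).
  apply: vnorm_le => [|i]; first exact: Cmod_ge_0.
  by rewrite /h; case: (i == j); [lra | rewrite Cmod_0; apply: Cmod_ge_0].
rewrite /is_derive0; cbv beta.
have -> : (fun t => Cminus (Cminus (f (fun i => if i == j then p t else z i))
              (f (fun i => if i == j then p 0 else z i))) (Cmult (RtoC t) (Cmult (D j) p'))) =
          (fun t => Cplus (Cminus (Cminus (f (vadd z (h t))) (f z)) (Cmult (D j) (q t)))
                          (Cmult (D j) (Cminus (q t) (Cmult (RtoC t) p'))))
  by apply: functional_extensionality => t; rewrite Eupd Ez; ring.
apply: littleo0_plus; last by apply: littleo0_scal.
(* f is o(|q t|) and q t = O(t) *)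
move=> eps; have [K HK] := is_derive0_bigO _ _ Hp; have HK0 := cond_pos K.
have [d [Hd Hf']] := Hf (eps / K) (Rdiv_lt_0_compat _ _ (cond_pos eps) HK0).
have dK : 0 < d / K by apply: Rdiv_lt_0_compat.
apply: filter_imp (filter_and _ _ HK (locally0_Rabs _ (mkposreal _ dK) (fun t H => H))).
move=> t /= [Hq Ht]; rewrite -Hsum; change (Cmod (q t) <= K * Rabs t) in Hq.
have Hqd : Cmod (q t) < d by have := proj2 (Rlt_div_r _ _ _ HK0) Ht; nra.
have Hh : in_polydisc d (h t) by move=> i; rewrite /h; case: (i == j); rewrite ?Cmod_0.
apply: Rle_trans (Hf' _ Hh) _.
have Hek : 0 <= eps / K by apply: Rlt_le; apply: Rdiv_lt_0_compat => //; exact: cond_pos.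
apply: Rle_trans (Rmult_le_compat_l _ _ _ Hek (Rle_trans _ _ _ (Hvnorm t) Hq)) _.
by right; field; lra.
Qed.

(** * Wirtinger derivatives of g = f o mono_vec *)

Lemma is_derive0_gab_shift {n} (a b : nat) (f : Vec n -> C) (w D : Vec n) (j : 'I_n)
    (e : R -> C) (c : C) :
  frechet_at f (mono_vec a b w) D -> (forall t, e t = Cmult (RtoC t) c) ->
  is_derive0 (fun t => gab a b f (shift w j (e t)))
    (Cmult (D j) (Cplus (Cmult c (mono_dz a b (w j))) (Cmult (Cconj c) (mono_dzbar a b (w j))))).
Proof.
move=> Hf He; have := frechet_at_update _ _ _ j _ _ Hf (is_derive0_mono a b (w j) c).
have -> : Cplus (w j) (Cmult (RtoC 0) c) = w j by apply: injective_projections => /=; ring.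
move=> /(_ (Logic.eq_refl _)); congr is_derive0; apply: functional_extensionality => t.
rewrite /gab; congr f; apply: functional_extensionality => i.
by rewrite /shift /mono_vec He; case: eqP => [->|].
Qed.

Definition mono_wirtinger {n} (a b : nat) (D : Vec n) (g : Vec n -> C) (w : Vec n) : Prop :=
  forall i, dw g w i = Cmult (D i) (mono_dz a b (w i)) /\
            dwbar g w i = Cmult (D i) (mono_dzbar a b (w i)).

Lemma wirtinger_gab {n} (a b : nat) (f : Vec n -> C) (w D : Vec n) :
  frechet_at f (mono_vec a b w) D -> mono_wirtinger a b D (gab a b f) w.
Proof.
move=> Hf j.
have Ex t : RtoC t = Cmult (RtoC t) (RtoC 1) by apply: injective_projections => /=; ring.
have Ey t : Cmult Ci (RtoC t) = Cmult (RtoC t) Ci by apply: injective_projections => /=; ring.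
have [Hx1 Hx2] := is_derive0_Derive _ _ (is_derive0_gab_shift a b f w D j _ _ Hf Ex).
have [Hy1 Hy2] := is_derive0_Derive _ _ (is_derive0_gab_shift a b f w D j _ _ Hf Ey).
rewrite /dw /dwbar /pdx /pdy Hx1 Hx2 Hy1 Hy2.
move: (D j) (mono_dz a b (w j)) (mono_dzbar a b (w j)) => [x1 y1] [x2 y2] [x3 y3].
by split; apply: injective_projections => /=; field.
Qed.

(** * The sign of C_g *)

Lemma Cjk_ge0_of_dwbar0 {n} (g : Vec n -> C) (w : Vec n) (j k : 'I_n) :
  (forall i, dwbar g w i = RtoC 0) -> 0 <= Cjk g w j k.
Proof.
move=> H0; rewrite /Cjk !H0.
have -> : Cminus (Cmult (w j) (RtoC 0)) (Cmult (w k) (RtoC 0)) = RtoC 0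
  by apply: injective_projections => /=; ring.
rewrite Cmod_0; have := pow2_ge_0 (Cmod (Cminus (Cmult (w j) (Cconj (dw g w k)))
                                        (Cmult (w k) (Cconj (dw g w j))))).
lra.
Qed.

Lemma Cjk_le0_of_dw0 {n} (g : Vec n -> C) (w : Vec n) (j k : 'I_n) :
  (forall i, dw g w i = RtoC 0) -> Cjk g w j k <= 0.
Proof.
move=> H0; rewrite /Cjk !H0.
have -> : Cminus (Cmult (w j) (Cconj (RtoC 0))) (Cmult (w k) (Cconj (RtoC 0))) = RtoC 0
  by apply: injective_projections => /=; ring.
rewrite Cmod_0; have := pow2_ge_0 (Cmod (Cminus (Cmult (w j) (dwbar g w k))
                                        (Cmult (w k) (dwbar g w j)))).
lra.
Qed.

Lemma Cjk_mono_wirtinger {n} (a b : nat) (D : Vec n) (g : Vec n -> C) (w : Vec n) (j k : 'I_n) :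
  mono_wirtinger a.+1 b.+1 D g w ->
  Cjk g w j k = (INR a.+1 ^ 2 - INR b.+1 ^ 2) *
    Cmod (Cmult (Cmult (w j) (w k))
      (Cminus (Cmult (D k) (mono a b (w k))) (Cmult (D j) (mono a b (w j))))) ^ 2.
Proof.
move=> HD; rewrite /Cjk; have [-> ->] := HD j; have [-> ->] := HD k.
set E := Cminus (Cmult (D k) _) _.
have -> : Cminus (Cmult (w j) (Cconj (Cmult (D k) (mono_dz a.+1 b.+1 (w k)))))
                 (Cmult (w k) (Cconj (Cmult (D j) (mono_dz a.+1 b.+1 (w j)))))
        = Cmult (RtoC (INR a.+1)) (Cmult (Cmult (w j) (w k)) (Cconj E)).
  rewrite /E /mono_dz /mono; move: (INR a.+1) => x /=.
  by rewrite !(Cmult_conj, Cminus_conj, Cconj_conj) Cconj_RtoC; ring.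
have -> : Cminus (Cmult (w j) (Cmult (D k) (mono_dzbar a.+1 b.+1 (w k))))
                 (Cmult (w k) (Cmult (D j) (mono_dzbar a.+1 b.+1 (w j))))
        = Cmult (RtoC (INR b.+1)) (Cmult (Cmult (w j) (w k)) E).
  by rewrite /E /mono_dzbar /mono; move: (INR b.+1) => x /=; ring.
by rewrite !Cmod_mult Cmod_conj !Cmod_R !Rabs_pos_eq; [ring | exact: pos_INR ..].
Qed.

Lemma Cg_ge0 {n} (g : Vec n -> C) (w : Vec n) :
  (forall j k, 0 <= Cjk g w j k) -> 0 <= Cg g w.
Proof.
move=> H; apply: (big_ind (fun x => 0 <= x)) => [|x y|j _]; try lra.
by apply: (big_ind (fun x => 0 <= x)) => [|x y|k _] //; lra.
Qed.

Lemma Cg_le0 {n} (g : Vec n -> C) (w : Vec n) :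
  (forall j k, Cjk g w j k <= 0) -> Cg g w <= 0.
Proof.
move=> H; apply: (big_ind (fun x => x <= 0)) => [|x y|j _]; try lra.
by apply: (big_ind (fun x => x <= 0)) => [|x y|k _] //; lra.
Qed.

Lemma Cg_ge0_mono_wirtinger {n} (a b : nat) (D : Vec n) (g : Vec n -> C) (w : Vec n) :
  (b < a)%N -> mono_wirtinger a b D g w -> 0 <= Cg g w.
Proof.
move=> Hab HD; apply: Cg_ge0 => j k.
case: a Hab HD => [//|a] Hab HD; case: b Hab HD => [|b] Hab HD.
  by apply: Cjk_ge0_of_dwbar0 => i; rewrite (proj2 (HD i)) /mono_dzbar /=;
     apply: injective_projections => /=; ring.
rewrite (Cjk_mono_wirtinger _ _ _ _ _ _ _ HD).
have := lt_INR _ _ (ssrnat.ltP Hab); have := pos_INR b.+1.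
move=> *; apply: Rmult_le_pos; [nra | exact: pow2_ge_0].
Qed.

Lemma Cg_le0_mono_wirtinger {n} (a b : nat) (D : Vec n) (g : Vec n -> C) (w : Vec n) :
  (a < b)%N -> mono_wirtinger a b D g w -> Cg g w <= 0.
Proof.
move=> Hab HD; apply: Cg_le0 => j k.
case: b Hab HD => [//|b] Hab HD; case: a Hab HD => [|a] Hab HD.
  by apply: Cjk_le0_of_dw0 => i; rewrite (proj1 (HD i)) /mono_dz /=;
     apply: injective_projections => /=; ring.
rewrite (Cjk_mono_wirtinger _ _ _ _ _ _ _ HD).
have := lt_INR _ _ (ssrnat.ltP Hab); have := pos_INR a.+1.
move=> *; apply: Rmult_le_0_r; [nra | exact: pow2_ge_0].
Qed.

Theorem lemma12 (n a b : nat) (f : Vec n -> C) :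
  (exists rho, 0 < rho /\ holomorphic_on rho f)%R ->
  ((b < a)%N ->
     exists r, (0 < r)%R /\ forall w : Vec n, in_polydisc r w ->
       gab a b f w = RtoC 0 -> (0 <= Cg (gab a b f) w)%R) /\
  ((a < b)%N ->
     exists r, (0 < r)%R /\ forall w : Vec n, in_polydisc r w ->
       gab a b f w = RtoC 0 -> (Cg (gab a b f) w <= 0)%R).
Proof.
move=> [rho [Hrho Hf]]; set r := Rmin 1 rho.
have Hr : 0 < r by apply: Rmin_pos; lra.
have wirtinger w : (0 < a + b)%N -> in_polydisc r w ->
    exists D, mono_wirtinger a b D (gab a b f) w.
  move=> Hab Hw; have Hm : in_polydisc rho (mono_vec a b w).
    move=> i; apply: Rlt_le_trans (Rmin_r 1 rho).
    exact: in_polydisc_mono_vec Hab (Rmin_l 1 rho) Hw i.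
  by have [D HD] := Hf _ Hm; exists D; apply: wirtinger_gab.
split=> Hab; exists r; split=> // w Hw _.
- have [D HD] := wirtinger w (ltn_addr b (leq_ltn_trans (leq0n b) Hab)) Hw.
  exact: Cg_ge0_mono_wirtinger Hab HD.
- have [D HD] := wirtinger w (ltn_addl a (leq_ltn_trans (leq0n a) Hab)) Hw.
  exact: Cg_le0_mono_wirtinger Hab HD.
Qed.
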